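(* Let $B\in\mathbb{F}_2^{s\times s}$ have all row and column weights equal to $w$, and let $H_X(B)=[\,B\otimes I_s\mid I_s\otimes B^{\mathsf T}\,]$, $H_Z(B)=[\,I_s\otimes B\mid B^{\mathsf T}\otimes I_s\,]$. Then for every $P\ge1$ and every CPM $P$ lift $(\hat H_X,\hat H_Z)$ of $(H_X(B),H_Z(B))$ whose shifts satisfy the CSS orthogonality zero constraints, each of the Tanner graphs of $\hat H_X$ and $\hat H_Z$ contains at least \[ N_8(B)=s^2\binom{w}{2}^2 \] Tanner 8-cycles forced by orthogonality (8-cycles of the base Tanner graph whose voltage is $0\bmod P$ for every such lift). In particular, if the Tanner graphs of $H_X(B)$ and $H_Z(B)$ have no 4-cycles and no 6-cycles, then the Tanner graphs of $\hat H_X$ and $\hat H_Z$ have girth exactly $8$ for every such CPM $P$ lift.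
   Context: Tanner graph of a binary matrix: bipartite graph of rows (checks) and columns (variables), edge iff the entry is $1$; girth is the length of a shortest cycle. A CPM $P$ lift assigns a shift in $\mathbb{Z}_P$ to each nonzero entry of the base matrices and replaces it by the $P\times P$ identity cyclically shifted by that amount (zero entries by zero blocks). CSS orthogonality zero constraints: for each row $x$ of $H_X$ and row $z$ of $H_Z$ the shared columns are paired and for each pair $\{c,c'\}$, $s^X_{x,c}-s^Z_{z,c}-s^X_{x,c'}+s^Z_{z,c'}\equiv0\pmod P$. The voltage of a base Tanner cycle is the alternating signed sum of the shifts of its edges; a base cycle lifts to closed cycles of the same length iff its voltage is $0\bmod P$. *)

From mathcomp Require Import all_boot all_order all_algebra.
Set Implicit Arguments. Unset Strict Implicit. Unset Printing Implicit Defensive.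
Import GRing.Theory.

(* Product/sum index types let us write Kronecker products and
   horizontal concatenations entrywise (lexicographic index order). *)
Definition bmat (R C : finType) := R -> C -> 'F_2.

Definition mx_of_B (s : nat) (B : 'M['F_2]_s) : bmat 'I_s 'I_s := fun i j => B i j.

Definition idm (T : finType) : bmat T T := fun i j => ((i == j) : nat)%:R%R.
Definition trm (R C : finType) (A : bmat R C) : bmat C R := fun i j => A j i.

Definition kron (R1 C1 R2 C2 : finType) (A : bmat R1 C1) (B : bmat R2 C2)
  : bmat (R1 * R2)%type (C1 * C2)%type := fun r c => (A r.1 c.1 * B r.2 c.2)%R.

Definition hcat (R C1 C2 : finType) (A : bmat R C1) (B : bmat R C2)
  : bmat R (C1 + C2)%type :=
  fun r c => match c with inl c1 => A r c1 | inr c2 => B r c2 end.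

Definition HX (s : nat) (B : 'M['F_2]_s) :=
  hcat (kron (mx_of_B B) (@idm 'I_s)) (kron (@idm 'I_s) (trm (mx_of_B B))).
Definition HZ (s : nat) (B : 'M['F_2]_s) :=
  hcat (kron (@idm 'I_s) (mx_of_B B)) (kron (trm (mx_of_B B)) (@idm 'I_s)).

Definition tanner (R C : finType) (H : bmat R C) : rel (R + C)%type :=
  fun u v => match u, v with
             | inl r, inr c => H r c != 0%R
             | inr c, inl r => H r c != 0%R
             | _, _ => false
             end.

Definition is_cycle (V : finType) (adj : rel V) (p : seq V) :=
  ucycleb adj p && (2 < size p).

(* The (undirected) edge set of a cyclic sequence; two cycles are identified iff
   they have the same edge set (so rotations/reversals are not counted twice). *)
Definition cyc_edges (V : finType) (p : seq V) : {set {set V}} :=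
  [set [set e.1; e.2] | e in zip p (rot 1 p)].

Definition is_ncycle_edges (V : finType) (adj : rel V) (n : nat) (E : {set {set V}}) :=
  exists p : seq V, [/\ is_cycle adj p, size p = n & E = cyc_edges p].

Definition has_ncycles (V : finType) (adj : rel V) (n N : nat) :=
  exists F : {set {set {set V}}},
    N <= #|F| /\ forall E, E \in F -> is_ncycle_edges adj n E.

Definition girth_is (V : finType) (adj : rel V) (g : nat) :=
  (exists p : seq V, is_cycle adj p /\ size p = g) /\
  (forall p : seq V, is_cycle adj p -> g <= size p).

Definition cpm (P : nat) (t a b : 'I_P) : 'F_2 :=
  ((val b == ((a + t) %% P)%N) : nat)%:R%R.

Definition cpm_lift (P : nat) (R C : finType) (H : bmat R C) (sh : R -> C -> 'I_P)
  : bmat (R * 'I_P)%type (C * 'I_P)%type :=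
  fun r c => (H r.1 c.1 * cpm (sh r.1 c.1) r.2 c.2)%R.

Definition css_orth (P : nat) (RX RZ C : finType) (HX : bmat RX C) (HZ : bmat RZ C)
  (sX : RX -> C -> 'I_P) (sZ : RZ -> C -> 'I_P) :=
  forall x z c c', c != c' ->
    HX x c != 0%R -> HZ z c != 0%R -> HX x c' != 0%R -> HZ z c' != 0%R ->
    (Posz (sX x c) - Posz (sZ z c) - Posz (sX x c') + Posz (sZ z c') = 0 %[mod (Posz P)])%Z.

Definition edge_volt (P : nat) (R C : finType) (sh : R -> C -> 'I_P)
  (e : ((R + C) * (R + C))%type) : int :=
  match e with
  | (inl r, inr c) => Posz (sh r c)
  | (inr c, inl r) => (- Posz (sh r c))%R
  | _ => 0%R
  end.

Definition voltage (P : nat) (R C : finType) (sh : R -> C -> 'I_P) (p : seq (R + C)%type) : int :=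
  (\sum_(e <- zip p (rot 1 p)) edge_volt sh e)%R.

From mathcomp Require Import all_boot all_order all_algebra.
From mathcomp Require Import ring.

(* Fix a Z-check z = (k1, k2).  For a <> b in the support of row k2 of B and c <> d in
   the support of column k1, the X-checks (c, a), (c, b), (d, b), (d, a) and the
   variables (k1, a), (c, k2), (k1, b), (d, k2) form an 8-cycle of the Tanner graph of
   H_X whose variables all lie in the support of z.  Orthogonality says that for every
   X-check x meeting z, s^X_{x,c} - s^Z_{z,c} is constant mod P on the common support,
   so along such a cycle the voltage is a coboundary and vanishes: the cycle lifts to
   closed 8-cycles.  The s^2 C(w,2)^2 cycles obtained this way have distinct edge sets;
   transposing the roles of the two tensor factors gives the same for H_Z.  For the
   girth, a vertex of a CPM lift has at most one neighbour over each base vertex, so a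
   lifted cycle of length 4 or 6 projects onto a base cycle of the same length. *)

Set Implicit Arguments. Unset Strict Implicit. Unset Printing Implicit Defensive.
Import GRing.Theory.

Section Cycles.
Variable V : eqType.

Lemma path_rcons_zip (r : rel V) x s y :
  path r x (rcons s y) = all [pred e | r e.1 e.2] (zip (x :: s) (rcons s y)).
Proof. by elim: s x => [|z s IHs] x /=; rewrite ?andbT ?IHs. Qed.

Lemma cycle_zip (r : rel V) p : cycle r p = all [pred e | r e.1 e.2] (zip p (rot 1 p)).
Proof. by case: p => // x s; rewrite rot1_cons /= path_rcons_zip. Qed.

Lemma unzip_zip_rot (p : seq V) :
  map fst (zip p (rot 1 p)) = p /\ map snd (zip p (rot 1 p)) = rot 1 p.
Proof. by split; [apply: unzip1_zip | apply: unzip2_zip]; rewrite size_rot. Qed.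

Lemma mem_zip_rot p (e : V * V) : e \in zip p (rot 1 p) -> (e.1 \in p) && (e.2 \in p).
Proof.
move=> pe; case: (unzip_zip_rot p) => p1 p2.
apply/andP; split; first by rewrite -p1 map_f.
by rewrite -(mem_rot 1) -p2 map_f.
Qed.

Lemma sum_zip_rot_sub (f : V -> int) p :
  (\sum_(e <- zip p (rot 1 p)) (f e.2 - f e.1) = 0)%R.
Proof.
rewrite sumrB -(big_map snd xpredT) -(big_map fst xpredT).
have rot_p : perm_eq (rot 1 p) p by rewrite perm_rot.
by case: (unzip_zip_rot p) => -> ->; rewrite (perm_big _ rot_p) subrr.
Qed.

End Cycles.

Lemma cyc_edges_map (V V' : finType) (f : V -> V') p :
  cyc_edges (map f p) = [set f @: E | E : {set V} in cyc_edges p].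
Proof.
rewrite /cyc_edges -imset_comp -map_rot.
have -> : zip (map f p) (map f (rot 1 p)) = map (fun e => (f e.1, f e.2)) (zip p (rot 1 p)).
  by elim: p (rot 1 p) => [|x p IHp] [|y q] //=; rewrite IHp.
apply/setP => E; apply/imsetP/imsetP => [[_ /mapP[e ep ->] ->]|[e ep ->]].
  by exists e => //=; rewrite imsetU1 imset_set1.
by exists (f e.1, f e.2); [exact: map_f | rewrite /= imsetU1 imset_set1].
Qed.

Lemma mem_cyc_edges (V : finType) (p : seq V) v : (v \in p) = (v \in cover (cyc_edges p)).
Proof.
rewrite cover_imset; apply/idP/bigcupP => [|[e /mem_zip_rot/andP[e1p e2p]]].
  by rewrite -{1}(unzip_zip_rot p).1 => /mapP[e ep ->]; exists e; rewrite ?inE ?eqxx.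
by rewrite !inE => /orP[]/eqP->.
Qed.

Definition cycle_family (V : finType) (adj : rel V) (n N : nat) (Q : seq V -> Prop) :=
  exists F : {set {set {set V}}}, N <= #|F| /\
    forall E, E \in F -> exists p, [/\ is_cycle adj p, size p = n, E = cyc_edges p & Q p].

Lemma sub_cycle_family (V : finType) (adj : rel V) n N (Q Q' : seq V -> Prop) :
  (forall p, is_cycle adj p -> Q p -> Q' p) ->
  cycle_family adj n N Q -> cycle_family adj n N Q'.
Proof.
move=> QQ' [F [NF famF]]; exists F; split=> // E /famF[p [cyc_p size_p ->]].
by exists p; split=> //; apply: QQ'.
Qed.

Definition is_check (R C : Type) (v : R + C) : bool := if v is inl _ then true else false.

Section Tanner.
Variables (R C : finType) (H : bmat R C).

Lemma tanner_sym : symmetric (tanner H).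
Proof. by case=> [r|c] [r'|c']. Qed.

Lemma tanner_is_check u v : tanner H u v -> is_check v = ~~ is_check u.
Proof. by case: u v => [r|c] [r'|c']. Qed.

Lemma path_is_check x s :
  path (tanner H) x s -> is_check (last x s) = is_check x (+) odd (size s).
Proof.
elim: s x => [|y s IHs] x /=; first by rewrite addbF.
by case/andP=> /tanner_is_check xy /IHs ->; rewrite xy addNb addbN.
Qed.

Lemma tanner_cycle_even p : cycle (tanner H) p -> ~~ odd (size p).
Proof.
case: p => [|x s] //= /path_is_check.
by rewrite last_rcons size_rcons /=; case: (is_check x); case: (odd _).
Qed.

End Tanner.

Definition dual_supported (R R' C : finType) (H' : bmat R' C) (p : seq (R + C)) :=
  exists z, forall c, inr c \in p -> H' z c != 0%R.

Section ForcedVoltage.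
Local Open Scope ring_scope.
Variables (R R' C : finType) (H : bmat R C) (H' : bmat R' C).
Variables (P : nat) (sh : R -> C -> 'I_P) (sh' : R' -> C -> 'I_P).
Hypothesis orth : css_orth H H' sh sh'.

Lemma css_orth_sym : css_orth H' H sh' sh.
Proof.
move=> z x c c' cc' H'zc Hxc H'zc' Hxc'; apply/eqP; rewrite eqz_mod_dvd subr0.
move/eqP: (orth cc' Hxc H'zc Hxc' H'zc'); rewrite eqz_mod_dvd subr0 -rpredN.
by rewrite !opprD !opprK [- _ + _]addrC addrAC.
Qed.

Lemma css_orth_dvd x z c c' : H x c != 0 -> H' z c != 0 ->
  H x c' != 0 -> H' z c' != 0 ->
  (P%:Z %| (sh x c)%:Z - (sh' z c)%:Z - (sh x c')%:Z + (sh' z c')%:Z)%Z.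
Proof.
have [<- _ _ _ _|cc' Hxc H'zc Hxc' H'zc'] := eqVneq c c'.
  by rewrite addrAC subrK subrr dvdz0.
by move/eqP: (orth cc' Hxc H'zc Hxc' H'zc'); rewrite eqz_mod_dvd subr0.
Qed.

(* By [css_orth_dvd] the choice of the common neighbour [c] of [x] and [z] does not
   matter mod [P]; the value on checks not meeting [z] is never used. *)
Definition potential (z : R') (v : R + C) : int :=
  match v with
  | inl x => if [pick c | (H x c != 0) && (H' z c != 0)] is Some c
             then (sh' z c)%:Z - (sh x c)%:Z else 0
  | inr c => sh' z c
  end.

Lemma potential_edge z x c : H x c != 0 -> H' z c != 0 ->
  (P%:Z %| (sh x c)%:Z - (potential z (inr c) - potential z (inl x)))%Z.
Proof.
move=> Hxc H'zc; rewrite /potential; case: pickP => [c' /andP[Hxc' H'zc']|/(_ c)].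
  rewrite /=; set a := (sh x c)%:Z; set b := (sh' z c)%:Z.
  set a' := (sh x c')%:Z; set b' := (sh' z c')%:Z.
  have -> : a - (b - (b' - a')) = a - b - a' + b' by ring.
  exact: css_orth_dvd.
by rewrite Hxc H'zc.
Qed.

Lemma voltage_dual_supported p :
  cycle (tanner H) p -> dual_supported H' p -> (voltage sh p = 0 %[mod P])%Z.
Proof.
rewrite cycle_zip => /allP cyc_p [z supp]; apply/eqP; rewrite eqz_mod_dvd subr0.
rewrite -[voltage sh p]subr0 -(sum_zip_rot_sub (potential z) p) /voltage -sumrB big_seq.
apply: rpred_sum => -[u v] uv; move: (cyc_p _ uv); case/andP: (mem_zip_rot uv).
case: u v {uv} => [x|c] [x'|c'] //= up vp Huv.
  exact: potential_edge Huv (supp _ vp).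
rewrite -rpredN opprD !opprK -(opprB (potential z (inr c))).
exact: potential_edge Huv (supp _ up).
Qed.

End ForcedVoltage.

Section CpmLift.
Variables (R C : finType) (H : bmat R C) (P : nat) (sh : R -> C -> 'I_P).
Hypothesis P_gt0 : 0 < P.

Local Notation vertex := ((R * 'I_P) + (C * 'I_P))%type.
Local Notation liftG := (tanner (cpm_lift H sh)).

Definition base (x : vertex) : R + C :=
  match x with inl (r, _) => inl r | inr (c, _) => inr c end.
Definition layer (x : vertex) : 'I_P :=
  match x with inl (_, i) => i | inr (_, j) => j end.
Definition lift_at (v : R + C) (t : 'I_P) : vertex :=
  match v with inl r => inl (r, t) | inr c => inr (c, t) end.

Definition modP (n : nat) : 'I_P := Ordinal (ltn_pmod n P_gt0).

(* The neighbour of [x] lying over [v]; meaningless unless [base x] and [v] are adjacent. *)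
Definition next_lift (x : vertex) (v : R + C) : vertex :=
  match x, v with
  | inl (r, i), inr c => inr (c, modP (i + sh r c))
  | inr (c, j), inl r => inl (r, modP (j + (P - sh r c)))
  | _, _ => lift_at v (layer x)
  end.

Lemma cpm_lift_neq0 r i c j :
  (cpm_lift H sh (r, i) (c, j) != 0%R) = (H r c != 0%R) && (val j == (i + sh r c) %% P).
Proof.
rewrite /cpm_lift /cpm /=; case: (_ == (i + sh r c) %% P).
  by rewrite mulr1 andbT.
by rewrite mulr0 eqxx andbF.
Qed.

Lemma base_lift_at v t : base (lift_at v t) = v. Proof. by case: v. Qed.
Lemma layer_lift_at v t : layer (lift_at v t) = t. Proof. by case: v. Qed.
Lemma lift_at_base x : lift_at (base x) (layer x) = x. Proof. by case: x => [[]|[]]. Qed.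
Lemma base_next_lift x v : base (next_lift x v) = v.
Proof. by case: x => [[r i]|[c j]]; case: v. Qed.

Lemma is_check_base x : is_check (base x) = is_check x.
Proof. by case: x => [[]|[]]. Qed.

Lemma liftG_base x y : liftG x y -> tanner H (base x) (base y).
Proof.
by case: x y => [[r i]|[c j]] [[r' i']|[c' j']] //=; rewrite cpm_lift_neq0 => /andP[].
Qed.

Lemma liftG_next_lift x v : tanner H (base x) v -> liftG x (next_lift x v).
Proof.
case: x v => [[r i]|[c j]] [r'|c'] //= Hrc; rewrite cpm_lift_neq0 Hrc //=.
rewrite modnDml -addnA subnK 1?ltnW // modnDr modn_small //.
Qed.

Lemma layer_next_lift x v : tanner H (base x) v ->
  (Posz (layer (next_lift x v)) = Posz (layer x) + edge_volt sh (base x, v) %[mod P])%Z.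
Proof.
case: x v => [[r i]|[c j]] [r'|c'] //= _; rewrite -modz_nat modz_mod PoszD //.
by rewrite -subzn 1?ltnW // addrA -addrA (addrC (Posz P)) addrA modzDr.
Qed.

Lemma base_scanl x s : map base (scanl next_lift x s) = s.
Proof. by elim: s x => //= v s IHs x; rewrite base_next_lift IHs. Qed.

Lemma path_scanl x s : path (tanner H) (base x) s -> path liftG x (scanl next_lift x s).
Proof.
elim: s x => //= v s IHs x /andP[xv vs].
by rewrite liftG_next_lift //= IHs ?base_next_lift.
Qed.

Lemma layer_foldl x s : path (tanner H) (base x) s ->
  (Posz (layer (foldl next_lift x s)) =
   Posz (layer x) + \sum_(e <- zip (belast (base x) s) s) edge_volt sh e %[mod P])%Z.
Proof.
elim: s x => [|v s IHs] x /=; first by rewrite big_nil addr0.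
case/andP=> xv vs; have := IHs (next_lift x v); rewrite base_next_lift => /(_ vs) ->.
by rewrite big_cons addrA -modzDml layer_next_lift // modzDml.
Qed.

Lemma lift_cycle p : is_cycle (tanner H) p -> (voltage sh p = 0 %[mod P])%Z ->
  exists2 q, is_cycle liftG q & map base q = p.
Proof.
case: p => [|v s] //; rewrite /is_cycle /ucycleb => /andP[/andP[cyc_p uniq_p] size_p] volt0.
pose x0 := lift_at v (modP 0).
have path_p : path (tanner H) (base x0) (rcons s v) by rewrite base_lift_at.
have closed : foldl next_lift x0 (rcons s v) = x0.
  rewrite -[LHS]lift_at_base {1}foldl_rcons base_next_lift; congr lift_at; apply: val_inj.
  move: (layer_foldl path_p); rewrite base_lift_at belast_rcons -rot1_cons.
  rewrite -/(voltage sh _) -modzDmr volt0 modzDmr addr0 layer_lift_at !modz_nat.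
  by move/eqP; rewrite eqz_nat /= modn_mod modn_small // => /eqP.
have base_q : map base (x0 :: scanl next_lift x0 s) = v :: s.
  by rewrite /= base_scanl base_lift_at.
exists (x0 :: scanl next_lift x0 s); last exact: base_q.
have uniq_q : uniq (x0 :: scanl next_lift x0 s).
  by apply: (map_uniq (f := base)); rewrite base_q.
rewrite /is_cycle /ucycleb uniq_q -(size_map base) base_q size_p !andbT.
by have := path_scanl path_p; rewrite scanl_rcons closed.
Qed.

Lemma liftG_nbr_inj v x y : liftG v x -> liftG v y -> base x = base y -> x = y.
Proof.
case: v x y => [[r i]|[c j]] [[r1 i1]|[c1 j1]] [[r2 i2]|[c2 j2]] //=.
  rewrite !cpm_lift_neq0 => /andP[_ /eqP j1E] /andP[_ /eqP j2E] [c12]; subst c2.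
  by congr (inr (_, _)); apply: val_inj; rewrite /= j1E j2E.
rewrite !cpm_lift_neq0 => /andP[_ /eqP i1E] /andP[_ /eqP i2E] [r12]; subst r2.
congr (inl (_, _)); apply: val_inj; apply/eqP => /=.
rewrite -(modn_small (ltn_ord i1)) -(modn_small (ltn_ord i2)).
by rewrite -(eqn_modDr (sh r1 c)) -i1E -i2E.
Qed.

Lemma base_last_odd_path x s :
  path liftG x s -> odd (size s) -> base (last x s) != base x.
Proof.
move=> /path_is_check check_last odd_s; apply/eqP => /(congr1 (@is_check _ _)).
by rewrite !is_check_base check_last odd_s addbT; case: is_check.
Qed.

Lemma liftG_base_neq x y : liftG x y -> base x != base y.
Proof. by move=> xy; rewrite eq_sym (base_last_odd_path (s := [:: y])) //= xy. Qed.

(* On a cycle of length at most 6 two vertices are adjacent, at distance 3, or have a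
   common neighbour; only in the last case can they lie over the same base vertex, and
   then they coincide by [liftG_nbr_inj]. *)
Lemma base_inj_short_cycle q : is_cycle liftG q -> size q < 8 -> {in q &, injective base}.
Proof.
move=> cyc_q q_lt8 x y xq; have [i t rot_q] := rot_to xq.
rewrite -(mem_rot i) rot_q inE => /predU1P[-> //|].
have : is_cycle liftG (x :: t).
  by rewrite -rot_q /is_cycle /ucycleb rot_cycle rot_uniq size_rot.
move: q_lt8; rewrite -(size_rot i) rot_q {rot_q} /is_cycle /ucycleb.
move=> size_t /andP[/andP[cyc_t _] t_gt2]; have := tanner_cycle_even cyc_t.
case: t size_t t_gt2 cyc_t => [|x1 [|x2 [|x3 [|x4 [|x5 [|x6 t]]]]]] //= + _.
- move=> _ /and5P[a1 a2 a3 a4 _] _; rewrite !inE => /or3P[]/eqP-> bxy.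
  + by move: (liftG_base_neq a1); rewrite bxy eqxx.
  + by apply: (liftG_nbr_inj (v := x1)); rewrite // tanner_sym.
  + by move: (liftG_base_neq a4); rewrite bxy eqxx.
- move=> _ /and5P[a1 a2 a3 a4 /and3P[a5 a6 _]] _.
  rewrite !inE => /or3P[/eqP->|/eqP->|/or3P[]/eqP->] bxy.
  + by move: (liftG_base_neq a1); rewrite bxy eqxx.
  + by apply: (liftG_nbr_inj (v := x1)); rewrite // tanner_sym.
  + have := base_last_odd_path (x := x) (s := [:: x1; x2; x3]).
    by rewrite /= a1 a2 a3 -bxy eqxx => /(_ isT isT).
  + by apply: (liftG_nbr_inj (v := x5)); rewrite // tanner_sym.
  + by move: (liftG_base_neq a6); rewrite bxy eqxx.
- by rewrite !ltnS leqn0 => /nilP-> /=.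
Qed.

Lemma short_lift_cycle q : is_cycle liftG q -> size q < 8 ->
  is_cycle (tanner H) (map base q) /\ (size q = 4 \/ size q = 6).
Proof.
move=> cyc_q q_lt8; have /andP[/andP[cyc uniq_q] q_gt2] := cyc_q; split.
  rewrite /is_cycle /ucycleb size_map q_gt2 (map_inj_in_uniq (base_inj_short_cycle _ _)) //.
  by rewrite uniq_q !andbT cycle_map; apply: sub_cycle cyc => x y /liftG_base.
move: q_lt8 q_gt2 (tanner_cycle_even cyc).
by case: (size q) => [|[|[|[|[|[|[|[|n]]]]]]]] //; [left|right].
Qed.

Lemma lift_girth8 N : (forall p, is_cycle (tanner H) p -> size p <> 4 /\ size p <> 6) ->
  has_ncycles liftG 8 N -> 0 < N -> girth_is liftG 8.
Proof.
move=> no_short [F [NF famF]] N_gt0; split.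
  have /set0Pn[E /famF[p [cyc_p size_p _]]] : F != set0 by rewrite -card_gt0 (leq_trans N_gt0).
  by exists p.
move=> q cyc_q; rewrite leqNgt; apply/negP => /(short_lift_cycle cyc_q) [/no_short].
by rewrite size_map => -[? ?] [].
Qed.

Lemma lift_has_ncycles n N :
  cycle_family (tanner H) n N (fun p => (voltage sh p = 0 %[mod P])%Z) ->
  has_ncycles liftG n N.
Proof.
case=> F [NF famF].
exists [set cyc_edges (tval q) | q in [pred q : n.-tuple _ | is_cycle liftG q]]; split.
  pose project (E : {set {set vertex}}) := [set base @: e | e : {set vertex} in E].
  apply: (leq_trans NF); apply: (leq_trans _ (leq_imset_card project _)).
  apply/subset_leq_card/subsetP => E /famF[p [cyc_p size_p -> volt0]].
  have [q cyc_q base_q] := lift_cycle cyc_p volt0.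
  have size_q : size q == n by rewrite -size_p -base_q size_map.
  apply/imsetP; exists (cyc_edges q); last by rewrite -base_q cyc_edges_map.
  by apply/imsetP; exists (Tuple size_q).
by move=> E /imsetP[q cyc_q ->]; exists (tval q); rewrite size_tuple.
Qed.

End CpmLift.

Lemma enum_card2 (T : finType) (A : {set T}) :
  #|A| = 2 -> exists a b, enum A = [:: a; b] /\ a != b.
Proof.
rewrite cardE; have := enum_uniq (mem A).
by case: (enum A) => [|a [|b [|]]] //= /andP[]; rewrite inE => ab _ _; exists a, b.
Qed.

Lemma inr_eq_inl (A B : eqType) (x : B) (y : A) : (inr x == inl y :> A + B) = false.
Proof. by []. Qed.

(* The 8-cycles of the theorem, abstracted over the layout of the hypergraph product:
   variables [lv k a] and [rv c k], checks [chk c a] of [H], and a check [dual k1 k2]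
   of [H'] whose support contains [lv k1 a] and [rv c k2] when [B k2 a] and [B c k1]
   are nonzero. *)
Section Octagons.
Variables (s : nat) (B : 'M['F_2]_s) (R R' C : finType) (H : bmat R C) (H' : bmat R' C).
Variables (lv rv : 'I_s -> 'I_s -> C) (chk : 'I_s -> 'I_s -> R) (dual : 'I_s -> 'I_s -> R').
Hypothesis lv_inj : forall k a k' a', lv k a = lv k' a' -> (k, a) = (k', a').
Hypothesis rv_inj : forall c k c' k', rv c k = rv c' k' -> (c, k) = (c', k').
Hypothesis chk_inj : forall c a c' a', chk c a = chk c' a' -> (c, a) = (c', a').
Hypothesis lv_neq_rv : forall k a c k', lv k a != rv c k'.
Hypothesis H_lv : forall k a c, B c k != 0%R -> H (chk c a) (lv k a) != 0%R.
Hypothesis H_rv : forall k a c, B k a != 0%R -> H (chk c a) (rv c k) != 0%R.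
Hypothesis H'_lv : forall k1 k2 a, B k2 a != 0%R -> H' (dual k1 k2) (lv k1 a) != 0%R.
Hypothesis H'_rv : forall k1 k2 c, B c k1 != 0%R -> H' (dual k1 k2) (rv c k2) != 0%R.

Let lv_eq k a k' a' : (lv k a == lv k' a') = (k == k') && (a == a').
Proof. by apply/eqP/andP => [/lv_inj[-> ->]|[/eqP-> /eqP->]]. Qed.
Let rv_eq c k c' k' : (rv c k == rv c' k') = (c == c') && (k == k').
Proof. by apply/eqP/andP => [/rv_inj[-> ->]|[/eqP-> /eqP->]]. Qed.
Let chk_eq c a c' a' : (chk c a == chk c' a') = (c == c') && (a == a').
Proof. by apply/eqP/andP => [/chk_inj[-> ->]|[/eqP-> /eqP->]]. Qed.

Definition octagon k1 k2 a b c d : seq (R + C) :=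
  [:: inr (lv k1 a); inl (chk c a); inr (rv c k2); inl (chk c b);
      inr (lv k1 b); inl (chk d b); inr (rv d k2); inl (chk d a)].

Lemma octagon_cycle k1 k2 a b c d : a != b -> c != d ->
  B c k1 != 0%R -> B d k1 != 0%R -> B k2 a != 0%R -> B k2 b != 0%R ->
  is_cycle (tanner H) (octagon k1 k2 a b c d).
Proof.
move=> ab cd Bck1 Bdk1 Bk2a Bk2b.
rewrite /is_cycle /ucycleb /= !H_lv ?H_rv //= !inE.
rewrite !(inj_eq inr_inj) !(inj_eq inl_inj) !lv_eq !rv_eq !chk_eq !eqxx.
rewrite (eq_sym b) (negbTE ab) (negbTE cd) [rv _ _ == _]eq_sym.
by rewrite !(negbTE (lv_neq_rv _ _ _ _)).
Qed.

Lemma mem_octagon_inr k1 k2 a b c d v :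
  (inr v \in octagon k1 k2 a b c d) = (v \in [:: lv k1 a; rv c k2; lv k1 b; rv d k2]).
Proof. by rewrite !inE !(inj_eq inr_inj) !inr_eq_inl !orFb orbF. Qed.

Lemma octagon_dual_supported k1 k2 a b c d :
  B c k1 != 0%R -> B d k1 != 0%R -> B k2 a != 0%R -> B k2 b != 0%R ->
  dual_supported H' (octagon k1 k2 a b c d).
Proof.
move=> Bck1 Bdk1 Bk2a Bk2b; exists (dual k1 k2) => v.
by rewrite mem_octagon_inr !inE => /or4P[]/eqP->; rewrite ?H'_lv ?H'_rv.
Qed.

Lemma mem_octagon_lv k1 k2 a b c d k x :
  (inr (lv k x) \in octagon k1 k2 a b c d) = (k == k1) && (x \in [:: a; b]).
Proof.
by rewrite mem_octagon_inr !inE !lv_eq !(negbTE (lv_neq_rv _ _ _ _)) /= orbF andb_orr.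
Qed.

Lemma mem_octagon_rv k1 k2 a b c d k x :
  (inr (rv x k) \in octagon k1 k2 a b c d) = (k == k2) && (x \in [:: c; d]).
Proof.
rewrite mem_octagon_inr !inE !rv_eq ![rv _ _ == _]eq_sym !(negbTE (lv_neq_rv _ _ _ _)) /=.
by rewrite andb_orr !(andbC (k == k2)).
Qed.

(* Junk ([::]) unless both sets have exactly two elements. *)
Definition octagon_of (t : ('I_s * 'I_s) * ({set 'I_s} * {set 'I_s})) : seq (R + C) :=
  if (enum t.2.1, enum t.2.2) is ([:: a; b], [:: c; d]) then octagon t.1.1 t.1.2 a b c d
  else [::].

Definition two_subsets (S : {set 'I_s}) := [set A : {set 'I_s} | (A \subset S) && (#|A| == 2)].

Definition octagon_pairs (k : 'I_s * 'I_s) : {set {set 'I_s} * {set 'I_s}} :=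
  setX (two_subsets [set a | B k.2 a != 0%R]) (two_subsets [set c | B c k.1 != 0%R]).

Definition octagon_index : {set ('I_s * 'I_s) * ({set 'I_s} * {set 'I_s})} :=
  [set t | t.2 \in octagon_pairs t.1].

Lemma card_octagon_index w :
  (forall i, #|[set j | B i j != 0%R]| = w) -> (forall j, #|[set i | B i j != 0%R]| = w) ->
  #|octagon_index| = s ^ 2 * 'C(w, 2) ^ 2.
Proof.
move=> row_w col_w; rewrite -sum1dep_card.
rewrite (eq_bigl (fun t => xpredT t.1 && (t.2 \in octagon_pairs t.1))) //.
rewrite -(pair_big_dep xpredT (fun k AD => AD \in octagon_pairs k) (fun _ _ => 1)) /=.
under eq_bigr => k _ do rewrite sum1_card cardsX !cards_draws row_w col_w.
by rewrite sum_nat_const card_prod card_ord mulnn -expnMn.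
Qed.

Lemma mem_octagon_of_lv k1 k2 (A D : {set 'I_s}) k x : #|A| = 2 -> #|D| = 2 ->
  (inr (lv k x) \in octagon_of (k1, k2, (A, D))) = (k == k1) && (x \in A).
Proof.
move=> /enum_card2[a [b [eA _]]] /enum_card2[c [d [eD _]]].
by rewrite /octagon_of /= eA eD mem_octagon_lv -eA mem_enum.
Qed.

Lemma mem_octagon_of_rv k1 k2 (A D : {set 'I_s}) k x : #|A| = 2 -> #|D| = 2 ->
  (inr (rv x k) \in octagon_of (k1, k2, (A, D))) = (k == k2) && (x \in D).
Proof.
move=> /enum_card2[a [b [eA _]]] /enum_card2[c [d [eD _]]].
by rewrite /octagon_of /= eA eD mem_octagon_rv -eD mem_enum.
Qed.

Lemma octagon_of_inj : {in octagon_index &, injective (fun t => cyc_edges (octagon_of t))}.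
Proof.
move=> [[k1 k2] [A D]] [[k1' k2'] [A' D']]; rewrite !inE /=.
move=> /andP[/andP[_ /eqP cA] /andP[_ /eqP cD]] /andP[/andP[_ /eqP cA'] /andP[_ /eqP cD']].
move=> same_edges.
have same v : (v \in octagon_of (k1, k2, (A, D))) = (v \in octagon_of (k1', k2', (A', D'))).
  by rewrite !mem_cyc_edges same_edges.
have [a [b [eA _]]] := enum_card2 cA; have [c [d [eD _]]] := enum_card2 cD.
have Aa : a \in A by rewrite -mem_enum eA mem_head.
have Dc : c \in D by rewrite -mem_enum eD mem_head.
have ek1 : k1 = k1'.
  by move: (same (inr (lv k1 a))); rewrite !mem_octagon_of_lv // eqxx Aa => /esym/andP[/eqP].
have ek2 : k2 = k2'.
  by move: (same (inr (rv c k2))); rewrite !mem_octagon_of_rv // eqxx Dc => /esym/andP[/eqP].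
subst k1' k2'.
congr (_, (_, _)); apply/setP => x.
  by move: (same (inr (lv k1 x))); rewrite !mem_octagon_of_lv // eqxx.
by move: (same (inr (rv x k2))); rewrite !mem_octagon_of_rv // eqxx.
Qed.

Lemma octagon_family w :
  (forall i, #|[set j | B i j != 0%R]| = w) -> (forall j, #|[set i | B i j != 0%R]| = w) ->
  cycle_family (tanner H) 8 (s ^ 2 * 'C(w, 2) ^ 2) (dual_supported H').
Proof.
move=> row_w col_w; exists [set cyc_edges (octagon_of t) | t in octagon_index]; split.
  by rewrite card_in_imset ?(card_octagon_index row_w col_w) //; exact: octagon_of_inj.
move=> _ /imsetP[[[k1 k2] [A D]] + ->].
rewrite !inE /= => /andP[/andP[sA /eqP cA] /andP[sD /eqP cD]].
have [a [b [eA ab]]] := enum_card2 cA; have [c [d [eD cd]]] := enum_card2 cD.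
have inA x : x \in [:: a; b] -> B k2 x != 0%R.
  by rewrite -eA mem_enum => /(subsetP sA); rewrite inE.
have inD x : x \in [:: c; d] -> B x k1 != 0%R.
  by rewrite -eD mem_enum => /(subsetP sD); rewrite inE.
exists (octagon k1 k2 a b c d); rewrite /octagon_of /= eA eD; split=> //.
  by apply: octagon_cycle; rewrite // ?inA ?inD // !inE eqxx ?orbT.
by apply: octagon_dual_supported; rewrite // ?inA ?inD // !inE eqxx ?orbT.
Qed.

End Octagons.

Section HypergraphProduct.
Variables (s : nat) (B : 'M['F_2]_s).

Lemma kron_neq0 (R1 C1 R2 C2 : finType) (A1 : bmat R1 C1) (A2 : bmat R2 C2) r c :
  (kron A1 A2 r c != 0%R) = (A1 r.1 c.1 != 0%R) && (A2 r.2 c.2 != 0%R).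
Proof. by rewrite /kron mulf_eq0 negb_or. Qed.

Lemma idm_neq0 (T : finType) (i j : T) : (idm i j != 0%R) = (i == j).
Proof. by rewrite /idm; case: (i == j); rewrite ?oner_neq0 ?eqxx. Qed.

Lemma HX_octagon_family w :
  (forall i, #|[set j | B i j != 0%R]| = w) -> (forall j, #|[set i | B i j != 0%R]| = w) ->
  cycle_family (tanner (HX B)) 8 (s ^ 2 * 'C(w, 2) ^ 2) (dual_supported (HZ B)).
Proof.
apply: (@octagon_family _ _ _ _ _ _ _ (fun k a => inl (k, a)) (fun c k => inr (c, k))
          (fun c a => (c, a)) (fun k1 k2 => (k1, k2))).
all: try by move=> ? ? ? ? [-> ->].
all: by move=> *; rewrite /HX /HZ /hcat /= ?kron_neq0 ?idm_neq0 ?eqxx ?andbT.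
Qed.

Lemma HZ_octagon_family w :
  (forall i, #|[set j | B i j != 0%R]| = w) -> (forall j, #|[set i | B i j != 0%R]| = w) ->
  cycle_family (tanner (HZ B)) 8 (s ^ 2 * 'C(w, 2) ^ 2) (dual_supported (HX B)).
Proof.
apply: (@octagon_family _ _ _ _ _ _ _ (fun k a => inl (a, k)) (fun c k => inr (k, c))
          (fun c a => (a, c)) (fun k1 k2 => (k2, k1))).
all: try by move=> ? ? ? ? [-> ->].
all: by move=> *; rewrite /HX /HZ /hcat /= ?kron_neq0 ?idm_neq0 ?eqxx ?andbT.
Qed.

End HypergraphProduct.

Unset Implicit Arguments.

Theorem mainTheorem4 (s w : nat) (B : 'M['F_2]_s) :
  (forall i : 'I_s, #|[set j | B i j != 0%R]| = w) ->
  (forall j : 'I_s, #|[set i | B i j != 0%R]| = w) ->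
  (forall P : nat, 0 < P ->
     (* forced 8-cycles of the base Tanner graphs: zero voltage for every
        orthogonality-respecting CPM P lift *)
     (exists F : {set {set {set ('I_s * 'I_s) + (('I_s * 'I_s) + ('I_s * 'I_s))}}},
        s ^ 2 * 'C(w, 2) ^ 2 <= #|F| /\
        forall E, E \in F ->
          exists p, [/\ is_cycle (tanner (HX B)) p, size p = 8, E = cyc_edges p &
            forall (sX : 'I_s * 'I_s -> ('I_s * 'I_s) + ('I_s * 'I_s) -> 'I_P)
                   (sZ : 'I_s * 'I_s -> ('I_s * 'I_s) + ('I_s * 'I_s) -> 'I_P),
              css_orth (HX B) (HZ B) sX sZ -> (voltage sX p = 0 %[mod (Posz P)])%Z]) /\
     (exists F : {set {set {set ('I_s * 'I_s) + (('I_s * 'I_s) + ('I_s * 'I_s))}}},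
        s ^ 2 * 'C(w, 2) ^ 2 <= #|F| /\
        forall E, E \in F ->
          exists p, [/\ is_cycle (tanner (HZ B)) p, size p = 8, E = cyc_edges p &
            forall (sX : 'I_s * 'I_s -> ('I_s * 'I_s) + ('I_s * 'I_s) -> 'I_P)
                   (sZ : 'I_s * 'I_s -> ('I_s * 'I_s) + ('I_s * 'I_s) -> 'I_P),
              css_orth (HX B) (HZ B) sX sZ -> (voltage sZ p = 0 %[mod (Posz P)])%Z]) /\
     (* hence the lifted Tanner graphs contain at least N_8 8-cycles *)
     (forall (sX : 'I_s * 'I_s -> ('I_s * 'I_s) + ('I_s * 'I_s) -> 'I_P)
             (sZ : 'I_s * 'I_s -> ('I_s * 'I_s) + ('I_s * 'I_s) -> 'I_P),
        css_orth (HX B) (HZ B) sX sZ ->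
        has_ncycles (tanner (cpm_lift (HX B) sX)) 8 (s ^ 2 * 'C(w, 2) ^ 2) /\
        has_ncycles (tanner (cpm_lift (HZ B) sZ)) 8 (s ^ 2 * 'C(w, 2) ^ 2))) /\
  ((forall p, is_cycle (tanner (HX B)) p -> size p <> 4 /\ size p <> 6) ->
   (forall p, is_cycle (tanner (HZ B)) p -> size p <> 4 /\ size p <> 6) ->
   0 < s -> 1 < w ->
   forall P : nat, 0 < P ->
   forall (sX : 'I_s * 'I_s -> ('I_s * 'I_s) + ('I_s * 'I_s) -> 'I_P)
          (sZ : 'I_s * 'I_s -> ('I_s * 'I_s) + ('I_s * 'I_s) -> 'I_P),
     css_orth (HX B) (HZ B) sX sZ ->
     girth_is (tanner (cpm_lift (HX B) sX)) 8 /\ girth_is (tanner (cpm_lift (HZ B) sZ)) 8).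
Proof.
move=> row_w col_w; set N := s ^ 2 * 'C(w, 2) ^ 2.
have forcedX P : cycle_family (tanner (HX B)) 8 N (fun p =>
    forall sX sZ : 'I_s * 'I_s -> ('I_s * 'I_s) + ('I_s * 'I_s) -> 'I_P,
      css_orth (HX B) (HZ B) sX sZ -> (voltage sX p = 0 %[mod P])%Z).
  apply: sub_cycle_family (HX_octagon_family row_w col_w) => p /andP[/andP[cyc_p _] _] supp.
  by move=> sX sZ orth; exact: (voltage_dual_supported orth cyc_p supp).
have forcedZ P : cycle_family (tanner (HZ B)) 8 N (fun p =>
    forall sX sZ : 'I_s * 'I_s -> ('I_s * 'I_s) + ('I_s * 'I_s) -> 'I_P,
      css_orth (HX B) (HZ B) sX sZ -> (voltage sZ p = 0 %[mod P])%Z).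
  apply: sub_cycle_family (HZ_octagon_family row_w col_w) => p /andP[/andP[cyc_p _] _] supp.
  by move=> sX sZ /css_orth_sym orth; exact: (voltage_dual_supported orth cyc_p supp).
have lifts P (sX sZ : 'I_s * 'I_s -> ('I_s * 'I_s) + ('I_s * 'I_s) -> 'I_P) :
    0 < P -> css_orth (HX B) (HZ B) sX sZ ->
    has_ncycles (tanner (cpm_lift (HX B) sX)) 8 N /\
    has_ncycles (tanner (cpm_lift (HZ B) sZ)) 8 N.
  move=> P_gt0 orth; split; apply: (lift_has_ncycles P_gt0).
    by apply: sub_cycle_family (forcedX P) => p _ /(_ sX sZ orth).
  by apply: sub_cycle_family (forcedZ P) => p _ /(_ sX sZ orth).
split=> [P P_gt0|noX noZ s_gt0 w_gt1 P P_gt0 sX sZ orth].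
  by split; [exact: forcedX | split; [exact: forcedZ | move=> sX sZ; exact: lifts]].
have N_gt0 : 0 < N by rewrite /N muln_gt0 !expn_gt0 s_gt0 bin_gt0 w_gt1.
have [liftX liftZ] := lifts P sX sZ P_gt0 orth.
by split; apply: lift_girth8 N_gt0.
Qed.
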